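(* Let $a<b$, let $f\in C([a,b])$ be complex valued, let $g\in C^1([a,b])$ be real valued with $|g'|>0$ on $[a,b]$, and let $p:\mathbb{C}\to\mathbb{C}$ be a polynomial. Then \[ \Big|\int_a^be^{ig(x)}f(x)dx-e^{ig(a)}\sum_{k=0}^{\deg p}i^{k+1}p^{(k)}(g(a))+e^{ig(b)}\sum_{k=0}^{\deg p}i^{k+1}p^{(k)}(g(b))\Big|\le\|f-(p\circ g)g'\|_{L^1(a,b)}. \]
   Context: $p^{(k)}$ denotes the $k$-th derivative of $p$. *)

From Stdlib Require Import Reals List.
From Coquelicot Require Import Coquelicot.
Open Scope R_scope.

Definition continuous_on_cc {V : UniformSpace} (f : R -> V) (a b : R) : Prop :=
  forall x, a <= x <= b ->
    filterlim f (within (fun y => a <= y <= b) (locally x)) (locally (f x)).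

Definition C1_on_cc (g dg : R -> R) (a b : R) : Prop :=
  continuous_on_cc g a b /\
  (forall x, a < x < b -> is_derive g x (dg x)) /\
  continuous_on_cc dg a b.

(* Complex polynomials, represented by their coefficient list [c0; c1; ...; cn],
   p(z) = c0 + c1 z + ... + cn z^n (Horner evaluation). *)
Definition poly_eval (cs : list C) (z : C) : C :=
  fold_right (fun c acc => (c + z * acc)%C) (RtoC 0) cs.

Fixpoint poly_deriv_aux (n : nat) (l : list C) : list C :=
  match l with
  | nil => nil
  | c :: l' => (RtoC (INR n) * c)%C :: poly_deriv_aux (S n) l'
  end.
Definition poly_deriv (cs : list C) : list C := poly_deriv_aux 1 (tl cs).

Fixpoint poly_deriv_n (k : nat) (cs : list C) : list C :=
  match k with
  | O => cs
  | S k' => poly_deriv (poly_deriv_n k' cs)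
  end.

(* Degree: largest index of a nonzero coefficient (0 for the zero polynomial). *)
Fixpoint poly_deg (cs : list C) : nat :=
  match cs with
  | nil => O
  | c :: l => match l with
              | nil => O
              | _ => if forallb (fun d => if Ceq_dec d (RtoC 0) then true else false) l
                     then O else S (poly_deg l)
              end
  end.

Definition expi (t : R) : C := (cos t, sin t).

(** Put S(z) = sum_{k <= deg p} i^(k+1) p^(k)(z).  Since p^(deg p + 1) = 0, the sum
    i S + S' telescopes to -p, so H := -e^{ig} S(g) has derivative e^{ig} p(g) g' on (a,b).
    The expression inside the modulus is therefore the integral of e^{ig} (f - p(g) g'),
    and |e^{ig}| = 1 bounds its modulus by the L^1 norm of f - p(g) g'. *)

From Stdlib Require Import Reals List Lra Lia.
From Coquelicot Require Import Coquelicot.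
Open Scope R_scope.

(** * Formal derivatives of coefficient lists *)

(* Convertible with the zero test inside [poly_deg]. *)
Definition coef_is_zero (c : C) : bool := if Ceq_dec c (RtoC 0) then true else false.

Lemma poly_eval_all_zero (cs : list C) (z : C) :
  forallb coef_is_zero cs = true -> poly_eval cs z = RtoC 0.
Proof.
  induction cs as [|c cs IH]; simpl; [reflexivity|].
  intros [Hc Hcs]%andb_prop. unfold coef_is_zero in Hc.
  destruct (Ceq_dec c (RtoC 0)) as [->|]; [|discriminate].
  rewrite IH by exact Hcs. ring.
Qed.

Lemma coef_is_zero_scale (n : nat) (c : C) :
  (0 < n)%nat -> coef_is_zero (RtoC (INR n) * c)%C = coef_is_zero c.
Proof.
  intros Hn. assert (Hn' : INR n <> 0) by (apply not_0_INR; lia).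
  unfold coef_is_zero.
  destruct (Ceq_dec c (RtoC 0)) as [->|Hc], (Ceq_dec _ (RtoC 0)) as [E|E]; auto.
  - exfalso; apply E; ring.
  - exfalso; apply Hc.
    replace c with (RtoC (/ INR n) * (RtoC (INR n) * c))%C.
    + rewrite E. ring.
    + rewrite Cmult_assoc, <- RtoC_mult, Rinv_l by exact Hn'. ring.
Qed.

Lemma forallb_poly_deriv_aux (n : nat) (cs : list C) : (0 < n)%nat ->
  forallb coef_is_zero (poly_deriv_aux n cs) = forallb coef_is_zero cs.
Proof.
  revert n; induction cs as [|c cs IH]; intros n Hn; simpl; [reflexivity|].
  rewrite coef_is_zero_scale, IH by lia. reflexivity.
Qed.

Lemma poly_deg_deriv_aux (n : nat) (cs : list C) : (0 < n)%nat ->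
  poly_deg (poly_deriv_aux n cs) = poly_deg cs.
Proof.
  revert n; induction cs as [|c [|c' cs] IH]; intros n Hn; try reflexivity.
  change (poly_deg (poly_deriv_aux n (c :: c' :: cs))) with
    (if forallb coef_is_zero (poly_deriv_aux (S n) (c' :: cs)) then O
     else S (poly_deg (poly_deriv_aux (S n) (c' :: cs)))).
  rewrite forallb_poly_deriv_aux, IH by lia. reflexivity.
Qed.

Lemma poly_deriv_nSr (k : nat) (cs : list C) :
  poly_deriv_n (S k) cs = poly_deriv_n k (poly_deriv cs).
Proof. induction k as [|k IH]; simpl in *; [reflexivity|]. now rewrite IH. Qed.

Lemma poly_deriv_deg0 (cs : list C) :
  poly_deg cs = O -> forallb coef_is_zero (poly_deriv cs) = true.
Proof.
  destruct cs as [|c [|c' cs]]; try reflexivity.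
  change (poly_deg (c :: c' :: cs)) with
    (if forallb coef_is_zero (c' :: cs) then O else S (poly_deg (c' :: cs))).
  unfold poly_deriv; simpl tl.
  destruct (forallb coef_is_zero (c' :: cs)) eqn:E; [|discriminate].
  intros _. rewrite forallb_poly_deriv_aux; auto.
Qed.

Lemma poly_deg_deriv (cs : list C) (d : nat) :
  poly_deg cs = S d -> poly_deg (poly_deriv cs) = d.
Proof.
  destruct cs as [|c [|c' cs]]; try discriminate.
  change (poly_deg (c :: c' :: cs)) with
    (if forallb coef_is_zero (c' :: cs) then O else S (poly_deg (c' :: cs))).
  unfold poly_deriv; simpl tl.
  destruct (forallb coef_is_zero (c' :: cs)); [discriminate|].
  intros [= <-]. apply poly_deg_deriv_aux; lia.
Qed.

Lemma poly_eval_deriv_n_deg (cs : list C) (z : C) :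
  poly_eval (poly_deriv_n (S (poly_deg cs)) cs) z = RtoC 0.
Proof.
  apply poly_eval_all_zero.
  remember (poly_deg cs) as d eqn:Hd; revert cs Hd.
  induction d as [|d IH]; intros cs Hd.
  - now apply poly_deriv_deg0.
  - rewrite poly_deriv_nSr. apply IH. symmetry. now apply poly_deg_deriv.
Qed.

Lemma poly_eval_deriv_aux (n : nat) (cs : list C) (z : C) :
  poly_eval (poly_deriv_aux n cs) z =
  (RtoC (INR n) * poly_eval cs z + z * poly_eval (poly_deriv cs) z)%C.
Proof.
  revert n; induction cs as [|c cs IH]; intros n; simpl; [ring|].
  change (poly_deriv (c :: cs)) with (poly_deriv_aux 1 cs).
  rewrite !IH, S_INR, RtoC_plus. simpl (INR 1). ring.
Qed.

(** * Componentwise derivatives of complex-valued functions *)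

(* Coquelicot has no product rule for [is_derive] into [C]. *)
Definition is_derive_C (u : R -> C) (t : R) (du : C) : Prop :=
  is_derive (fun s => fst (u s)) t (fst du) /\ is_derive (fun s => snd (u s)) t (snd du).

Lemma is_derive_C_ext (u v : R -> C) (t : R) (du : C) :
  (forall s, u s = v s) -> is_derive_C u t du -> is_derive_C v t du.
Proof.
  intros E [H1 H2]; split;
    [apply (is_derive_ext (fun s => fst (u s))) | apply (is_derive_ext (fun s => snd (u s)))];
    auto; intros s; now rewrite E.
Qed.

Lemma is_derive_C_const (c : C) (t : R) : is_derive_C (fun _ => c) t (RtoC 0).
Proof. split; apply (is_derive_const (K := R_AbsRing) (V := R_NormedModule)). Qed.

Lemma is_derive_C_RtoC (t : R) : is_derive_C RtoC t (RtoC 1).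
Proof.
  split; simpl; [apply (is_derive_id (K := R_AbsRing)) |].
  apply (is_derive_const (K := R_AbsRing) (V := R_NormedModule)).
Qed.

Lemma is_derive_C_plus (u v : R -> C) (t : R) (du dv : C) :
  is_derive_C u t du -> is_derive_C v t dv ->
  is_derive_C (fun s => u s + v s)%C t (du + dv)%C.
Proof.
  intros [U1 U2] [V1 V2]; split; simpl;
    [exact (is_derive_plus _ _ _ _ _ U1 V1) | exact (is_derive_plus _ _ _ _ _ U2 V2)].
Qed.

Lemma is_derive_C_mult (u v : R -> C) (t : R) (du dv : C) :
  is_derive_C u t du -> is_derive_C v t dv ->
  is_derive_C (fun s => u s * v s)%C t (du * v t + u t * dv)%C.
Proof.
  intros [U1 U2] [V1 V2].
  assert (M := fun f g df dg (Hf : is_derive f t df) (Hg : is_derive g t dg) =>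
    is_derive_mult f g t df dg Hf Hg Rmult_comm).
  split; simpl.
  - replace (fst du * fst (v t) - snd du * snd (v t) + (fst (u t) * fst dv - snd (u t) * snd dv))
      with (fst du * fst (v t) + fst (u t) * fst dv
            - (snd du * snd (v t) + snd (u t) * snd dv)) by ring.
    exact (is_derive_minus _ _ _ _ _ (M _ _ _ _ U1 V1) (M _ _ _ _ U2 V2)).
  - replace (fst du * snd (v t) + snd du * fst (v t) + (fst (u t) * snd dv + snd (u t) * fst dv))
      with (fst du * snd (v t) + fst (u t) * snd dv
            + (snd du * fst (v t) + snd (u t) * fst dv)) by ring.
    exact (is_derive_plus _ _ _ _ _ (M _ _ _ _ U1 V2) (M _ _ _ _ U2 V1)).
Qed.

Lemma is_derive_C_mult_const_l (c : C) (u : R -> C) (t : R) (du : C) :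
  is_derive_C u t du -> is_derive_C (fun s => c * u s)%C t (c * du)%C.
Proof.
  intros Hu. replace (c * du)%C with (RtoC 0 * u t + c * du)%C by ring.
  exact (is_derive_C_mult _ _ _ _ _ (is_derive_C_const c t) Hu).
Qed.

Lemma is_derive_C_opp (u : R -> C) (t : R) (du : C) :
  is_derive_C u t du -> is_derive_C (fun s => - u s)%C t (- du)%C.
Proof.
  intros [U1 U2]; split; simpl; [exact (is_derive_opp _ _ _ U1) | exact (is_derive_opp _ _ _ U2)].
Qed.

Lemma is_derive_C_comp (u : R -> C) (g : R -> R) (t : R) (du : C) (dg : R) :
  is_derive_C u (g t) du -> is_derive g t dg ->
  is_derive_C (fun s => u (g s)) t (du * RtoC dg)%C.
Proof.
  intros [U1 U2] G; split; simpl.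
  - replace (fst du * dg - snd du * 0) with (dg * fst du) by ring.
    exact (is_derive_comp (fun s => fst (u s)) g t _ _ U1 G).
  - replace (fst du * 0 + snd du * dg) with (dg * snd du) by ring.
    exact (is_derive_comp (fun s => snd (u s)) g t _ _ U2 G).
Qed.

Lemma is_derive_C_expi (t : R) : is_derive_C expi t (Ci * expi t)%C.
Proof.
  split; simpl.
  - replace (0 * cos t - 1 * sin t) with (- sin t) by ring. apply is_derive_cos.
  - replace (0 * sin t + 1 * cos t) with (cos t) by ring. apply is_derive_sin.
Qed.

Lemma is_derive_C_poly_eval (cs : list C) (t : R) :
  is_derive_C (fun s => poly_eval cs (RtoC s)) t (poly_eval (poly_deriv cs) (RtoC t)).
Proof.
  induction cs as [|c cs IH]; simpl.
  - apply is_derive_C_const.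
  - change (poly_deriv (c :: cs)) with (poly_deriv_aux 1 cs).
    rewrite <- (Cplus_0_l (poly_eval (poly_deriv_aux 1 cs) (RtoC t))).
    apply is_derive_C_plus; [apply is_derive_C_const|].
    rewrite poly_eval_deriv_aux.
    apply (is_derive_C_mult RtoC); [apply is_derive_C_RtoC | exact IH].
Qed.

Lemma is_derive_C_sum_n (u : nat -> R -> C) (du : nat -> C) (N : nat) (t : R) :
  (forall k, is_derive_C (u k) t (du k)) ->
  is_derive_C (fun s => sum_n (fun k => u k s) N) t (sum_n du N).
Proof.
  intros Hu. induction N as [|N IH].
  - apply (is_derive_C_ext (u 0%nat)); [intros s; now rewrite sum_O|].
    rewrite sum_O. apply Hu.
  - apply (is_derive_C_ext (fun s => sum_n (fun k => u k s) N + u (S N) s)%C).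
    + intros s. now rewrite sum_Sn.
    + rewrite sum_Sn. now apply is_derive_C_plus.
Qed.

Definition boundary_sum (cs : list C) (N : nat) (z : C) : C :=
  sum_n (fun k => Ci ^ (k + 1) * poly_eval (poly_deriv_n k cs) z)%C N.

Lemma is_derive_C_boundary_sum (cs : list C) (N : nat) (t : R) :
  is_derive_C (fun s => boundary_sum cs N (RtoC s)) t (boundary_sum (poly_deriv cs) N (RtoC t)).
Proof.
  apply is_derive_C_sum_n. intros k.
  rewrite <- poly_deriv_nSr. apply is_derive_C_mult_const_l, is_derive_C_poly_eval.
Qed.

Lemma boundary_sum_telescope (cs : list C) (N : nat) (z : C) :
  (Ci * boundary_sum cs N z + boundary_sum (poly_deriv cs) N z =
   Ci ^ (N + 1) * poly_eval (poly_deriv_n (S N) cs) z - poly_eval cs z)%C.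
Proof.
  assert (Ci2 : (Ci * Ci = - RtoC 1)%C) by (apply injective_projections; simpl; ring).
  unfold boundary_sum. induction N as [|N IH].
  - rewrite !sum_O, <- poly_deriv_nSr.
    transitivity (Ci * Ci * poly_eval cs z + Ci * poly_eval (poly_deriv_n 1 cs) z)%C.
    + simpl. ring.
    + rewrite Ci2. simpl. ring.
  - rewrite !sum_Sn, <- poly_deriv_nSr. change (@plus _ ?x ?y) with (Cplus x y).
    transitivity (Ci * sum_n (fun k => Ci ^ (k + 1) * poly_eval (poly_deriv_n k cs) z) N
                  + sum_n (fun k => Ci ^ (k + 1) * poly_eval (poly_deriv_n k (poly_deriv cs)) z) N
                  + Ci * Ci * (Ci ^ (N + 1) * poly_eval (poly_deriv_n (S N) cs) z)
                  + Ci ^ (S N + 1) * poly_eval (poly_deriv_n (S (S N)) cs) z)%C.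
    + replace (S N + 1)%nat with (S (N + 1)) by lia. simpl. ring.
    + rewrite IH, Ci2. ring.
Qed.

Lemma is_derive_C_expi_boundary_sum (cs : list C) (t : R) :
  is_derive_C (fun s => - (expi s * boundary_sum cs (poly_deg cs) (RtoC s)))%C t
    (expi t * poly_eval cs (RtoC t))%C.
Proof.
  assert (Hp : poly_eval cs (RtoC t) =
    (- (Ci * boundary_sum cs (poly_deg cs) (RtoC t)
        + boundary_sum (poly_deriv cs) (poly_deg cs) (RtoC t)))%C).
  { rewrite boundary_sum_telescope, poly_eval_deriv_n_deg. ring. }
  rewrite Hp.
  replace (expi t * - (Ci * boundary_sum cs (poly_deg cs) (RtoC t)
                        + boundary_sum (poly_deriv cs) (poly_deg cs) (RtoC t)))%C
    with (- (Ci * expi t * boundary_sum cs (poly_deg cs) (RtoC t)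
             + expi t * boundary_sum (poly_deriv cs) (poly_deg cs) (RtoC t)))%C by ring.
  apply is_derive_C_opp, is_derive_C_mult;
    [apply is_derive_C_expi | apply is_derive_C_boundary_sum].
Qed.

(** * Continuity on a closed interval *)

(* [h (clamp a b x)] extends a function continuous on [a,b] to one continuous on all of [R],
   which is what Coquelicot's integrability and FTC lemmas require. *)
Definition clamp (a b x : R) : R := Rmax a (Rmin b x).

Lemma clamp_in (a b x : R) : a <= b -> a <= clamp a b x <= b.
Proof. intros. unfold clamp, Rmax, Rmin. repeat destruct Rle_dec; lra. Qed.

Lemma clamp_id (a b x : R) : a <= x <= b -> clamp a b x = x.
Proof. intros. unfold clamp, Rmax, Rmin. repeat destruct Rle_dec; lra. Qed.

Lemma continuous_clamp (a b x : R) : continuous (clamp a b) x.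
Proof.
  apply filterlim_locally. intros eps. exists eps. intros y Hy.
  change (Rabs (clamp a b y - clamp a b x) < eps). change (Rabs (y - x) < eps) in Hy.
  unfold clamp, Rmax, Rmin in *. repeat destruct Rle_dec;
    unfold Rabs in *; repeat destruct Rcase_abs; lra.
Qed.

Lemma continuous_comp_clamp {V : UniformSpace} (h : R -> V) (a b x : R) :
  a <= b -> continuous_on_cc h a b -> continuous (fun y => h (clamp a b y)) x.
Proof.
  intros Hab Hh.
  apply (filterlim_comp _ _ _ (clamp a b) h _
           (within (fun y => a <= y <= b) (locally (clamp a b x)))).
  - intros P HP. change (locally x (fun y => P (clamp a b y))).
    apply (filter_imp (fun y => a <= clamp a b y <= b -> P (clamp a b y))).
    + intros y H. exact (H (clamp_in a b y Hab)).
    + exact (continuous_clamp a b x _ HP).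
  - exact (Hh _ (clamp_in a b x Hab)).
Qed.

Lemma ex_RInt_continuous_on_cc {V : CompleteNormedModule R_AbsRing} (h : R -> V) (a b : R) :
  a <= b -> continuous_on_cc h a b -> ex_RInt h a b.
Proof.
  intros Hab Hh.
  apply (ex_RInt_ext (fun y => h (clamp a b y))).
  - intros x Hx. rewrite Rmin_left, Rmax_right in Hx by exact Hab.
    rewrite clamp_id by lra. reflexivity.
  - apply ex_RInt_continuous. intros z _. now apply continuous_comp_clamp.
Qed.

Lemma continuous_on_cc_comp {U V : UniformSpace} (h : R -> U) (phi : U -> V) (a b : R) :
  continuous_on_cc h a b -> (forall x, a <= x <= b -> continuous phi (h x)) ->
  continuous_on_cc (fun y => phi (h y)) a b.
Proof. intros Hh Hphi x Hx. exact (filterlim_comp _ _ _ h phi _ _ _ (Hh x Hx) (Hphi x Hx)). Qed.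

Lemma continuous_on_cc_of_continuous {V : UniformSpace} (h : R -> V) (a b : R) :
  (forall x, a <= x <= b -> continuous h x) -> continuous_on_cc h a b.
Proof. intros Hh x Hx. exact (filterlim_filter_le_1 h (filter_le_within _) (Hh x Hx)). Qed.

Lemma continuous_on_cc_plus (u v : R -> R) (a b : R) :
  continuous_on_cc u a b -> continuous_on_cc v a b ->
  continuous_on_cc (fun y => u y + v y) a b.
Proof.
  intros Hu Hv x Hx.
  exact (filterlim_comp_2 u v Rplus (Hu x Hx) (Hv x Hx) (filterlim_plus (V := R_NormedModule) _ _)).
Qed.

Lemma continuous_on_cc_mult (u v : R -> R) (a b : R) :
  continuous_on_cc u a b -> continuous_on_cc v a b ->
  continuous_on_cc (fun y => u y * v y) a b.
Proof.
  intros Hu Hv x Hx.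
  exact (filterlim_comp_2 u v Rmult (Hu x Hx) (Hv x Hx) (filterlim_mult (K := R_AbsRing) _ _)).
Qed.

Lemma continuous_on_cc_opp (u : R -> R) (a b : R) :
  continuous_on_cc u a b -> continuous_on_cc (fun y => - u y) a b.
Proof.
  intros Hu. apply (continuous_on_cc_comp u Ropp); [exact Hu|].
  intros x _. exact (filterlim_opp (V := R_NormedModule) _).
Qed.

(** * The fundamental theorem with derivatives on the open interval *)

Lemma continuous_on_cc_at_left {V : UniformSpace} (h : R -> V) (a b : R) :
  a < b -> continuous_on_cc h a b -> filterlim h (at_left b) (locally (h b)).
Proof.
  intros Hab Hh.
  apply (filterlim_filter_le_1 h) with (2 := Hh b (conj (Rlt_le _ _ Hab) (Rle_refl b))).
  intros P HP.
  assert (Ha : locally b (fun y => a < y)) by exact (open_gt a b Hab).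
  unfold at_left, within in *.
  apply (filter_imp (fun y => (a <= y <= b -> P y) /\ a < y)).
  - intros y [HPy Hay] Hyb. apply HPy. lra.
  - exact (filter_and _ _ HP Ha).
Qed.

Lemma continuous_on_cc_at_right {V : UniformSpace} (h : R -> V) (a b : R) :
  a < b -> continuous_on_cc h a b -> filterlim h (at_right a) (locally (h a)).
Proof.
  intros Hab Hh.
  apply (filterlim_filter_le_1 h) with (2 := Hh a (conj (Rle_refl a) (Rlt_le _ _ Hab))).
  intros P HP.
  assert (Hb : locally a (fun y => y < b)) by exact (open_lt b a Hab).
  unfold at_right, within in *.
  apply (filter_imp (fun y => (a <= y <= b -> P y) /\ y < b)).
  - intros y [HPy Hyb] Hay. apply HPy. lra.
  - exact (filter_and _ _ HP Hb).
Qed.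

Lemma continuous_on_cc_eq_at_endpoints {K : AbsRing} {V : NormedModule K} (F G : R -> V) (a b : R) :
  a < b -> continuous_on_cc F a b -> continuous G a -> continuous G b ->
  (forall y, a < y < b -> F y = G y) -> F a = G a /\ F b = G b.
Proof.
  intros Hab HF HGa HGb HFG. split.
  - apply (filterlim_locally_unique F _ _ (continuous_on_cc_at_right F a b Hab HF)).
    apply (filterlim_ext_loc G).
    + unfold at_right, within. apply (filter_imp (fun y => y < b)).
      * intros y Hyb Hay. symmetry. apply HFG. lra.
      * exact (open_lt b a Hab).
    + exact (filterlim_filter_le_1 G (filter_le_within _) HGa).
  - apply (filterlim_locally_unique F _ _ (continuous_on_cc_at_left F a b Hab HF)).
    apply (filterlim_ext_loc G).
    + unfold at_left, within. apply (filter_imp (fun y => a < y)).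
      * intros y Hay Hyb. symmetry. apply HFG. lra.
      * exact (open_gt a b Hab).
    + exact (filterlim_filter_le_1 G (filter_le_within _) HGb).
Qed.

(* [F] differs from [fun x => RInt f a x] by a constant on (a,b), hence on [a,b] by
   continuity; Coquelicot's [is_RInt_derive] would need derivatives at the endpoints. *)
Lemma is_RInt_derive_interior (F f : R -> R) (a b : R) :
  a < b -> continuous_on_cc F a b -> continuous_on_cc f a b ->
  (forall x, a < x < b -> is_derive F x (f x)) ->
  is_RInt f a b (F b - F a).
Proof.
  intros Hab HF Hf HD.
  set (fc := fun y => f (clamp a b y)).
  assert (Hfc : forall x, continuous fc x)
    by (intros; apply continuous_comp_clamp; [lra | exact Hf]).
  assert (Hfc_int : forall u v, is_RInt fc u v (RInt fc u v)).
  { intros u v. apply (RInt_correct (V := R_CompleteNormedModule)), ex_RInt_continuous. auto. }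
  set (I := fun x => RInt fc a x).
  assert (HI : forall x, continuous I x).
  { intros x. apply (continuous_RInt_1 fc a x I), filter_forall. intros; apply Hfc_int. }
  set (m := (a + b) / 2).
  set (G := fun y => I y + (F m - I m)).
  assert (HFG : forall y, a < y < b -> F y = G y).
  { intros y Hy.
    assert (Hmy : is_RInt fc m y (F y - F m)).
    { apply (is_RInt_derive F fc m y); [|auto].
      intros x Hx. unfold Rmin, Rmax in Hx.
      assert (a < x < b) by (destruct (Rle_dec m y); unfold m in *; lra).
      unfold fc. rewrite clamp_id by lra. auto. }
    unfold G, I. rewrite <- (RInt_Chasles fc a m y) by (eexists; apply Hfc_int).
    rewrite (is_RInt_unique fc m y _ Hmy). change plus with Rplus. ring. }
  assert (HG : forall x, continuous G x).
  { intros x. apply (continuous_plus I (fun _ => F m - I m)); [apply HI | apply continuous_const]. }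
  destruct (continuous_on_cc_eq_at_endpoints F G a b Hab HF (HG a) (HG b) HFG) as [Ea Eb].
  replace (F b - F a) with (RInt fc a b).
  - apply (is_RInt_ext fc); [|apply Hfc_int].
    intros x Hx. rewrite Rmin_left, Rmax_right in Hx by lra.
    unfold fc. rewrite clamp_id by lra. reflexivity.
  - rewrite Ea, Eb. unfold G, I. rewrite RInt_point. change (@zero _) with 0. lra.
Qed.

Definition continuous_on_cc_C (u : R -> C) (a b : R) : Prop :=
  continuous_on_cc (fun y => fst (u y)) a b /\ continuous_on_cc (fun y => snd (u y)) a b.

Lemma continuous_on_cc_C_of_continuous_on_cc (u : R -> C) (a b : R) :
  continuous_on_cc u a b -> continuous_on_cc_C u a b.
Proof.
  intros Hu. split; apply (continuous_on_cc_comp (U := C_UniformSpace) u); auto;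
    intros x _; destruct (u x) as [p q].
  - exact (continuous_fst (U := R_UniformSpace) (V := R_UniformSpace) p q).
  - exact (continuous_snd (U := R_UniformSpace) (V := R_UniformSpace) p q).
Qed.

Lemma continuous_on_cc_C_RtoC (h : R -> R) (a b : R) :
  continuous_on_cc h a b -> continuous_on_cc_C (fun y => RtoC (h y)) a b.
Proof.
  intros Hh. split; [exact Hh|].
  apply continuous_on_cc_of_continuous. intros x _. apply continuous_const.
Qed.

Lemma continuous_on_cc_C_minus (u v : R -> C) (a b : R) :
  continuous_on_cc_C u a b -> continuous_on_cc_C v a b ->
  continuous_on_cc_C (fun y => u y - v y)%C a b.
Proof.
  intros [U1 U2] [V1 V2].
  split; simpl; apply continuous_on_cc_plus; auto; now apply continuous_on_cc_opp.
Qed.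

Lemma continuous_on_cc_C_mult (u v : R -> C) (a b : R) :
  continuous_on_cc_C u a b -> continuous_on_cc_C v a b ->
  continuous_on_cc_C (fun y => u y * v y)%C a b.
Proof.
  intros [U1 U2] [V1 V2]. split; simpl.
  - apply continuous_on_cc_plus; [|apply continuous_on_cc_opp]; now apply continuous_on_cc_mult.
  - apply continuous_on_cc_plus; now apply continuous_on_cc_mult.
Qed.

Lemma continuous_on_cc_C_comp_derivable (u : R -> C) (h : R -> R) (a b : R) :
  (forall t, exists du, is_derive_C u t du) -> continuous_on_cc h a b ->
  continuous_on_cc_C (fun y => u (h y)) a b.
Proof.
  intros Hu Hh.
  split; [apply (continuous_on_cc_comp h (fun s => fst (u s)))
         |apply (continuous_on_cc_comp h (fun s => snd (u s)))]; auto;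
    intros x _; destruct (Hu (h x)) as [du [D1 D2]];
    apply (ex_derive_continuous (K := R_AbsRing) (V := R_NormedModule)); eexists; eassumption.
Qed.

Lemma continuous_on_cc_Cmod (u : R -> C) (a b : R) :
  continuous_on_cc_C u a b -> continuous_on_cc (fun y => Cmod (u y)) a b.
Proof.
  intros [U1 U2]. unfold Cmod.
  apply (continuous_on_cc_comp (fun y => fst (u y) ^ 2 + snd (u y) ^ 2) sqrt).
  - apply continuous_on_cc_plus; simpl; apply continuous_on_cc_mult; auto;
      apply continuous_on_cc_mult; auto; apply continuous_on_cc_of_continuous;
      intros; apply continuous_const.
  - intros x _. apply continuous_sqrt.
Qed.

Lemma ex_RInt_continuous_on_cc_C (u : R -> C) (a b : R) :
  a <= b -> continuous_on_cc_C u a b -> ex_RInt (V := C_R_CompleteNormedModule) u a b.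
Proof.
  intros Hab [U1 U2].
  apply (ex_RInt_fct_extend_pair (U := R_NormedModule) (V := R_NormedModule));
    now apply (ex_RInt_continuous_on_cc (V := R_CompleteNormedModule)).
Qed.

Lemma is_RInt_derive_C_interior (F f : R -> C) (a b : R) :
  a < b -> continuous_on_cc_C F a b -> continuous_on_cc_C f a b ->
  (forall x, a < x < b -> is_derive_C F x (f x)) ->
  is_RInt (V := C_R_NormedModule) f a b (F b - F a)%C.
Proof.
  intros Hab [F1 F2] [f1 f2] HD.
  change (F b - F a)%C with (fst (F b) - fst (F a), snd (F b) - snd (F a)).
  apply (is_RInt_fct_extend_pair (U := R_NormedModule) (V := R_NormedModule)).
  - apply (is_RInt_derive_interior (fun y => fst (F y))); auto. intros x Hx; apply (HD x Hx).
  - apply (is_RInt_derive_interior (fun y => snd (F y))); auto. intros x Hx; apply (HD x Hx).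
Qed.

(** * Integrating e^{ig} p(g) g' *)

Lemma continuous_on_cc_C_expi_comp (g : R -> R) (a b : R) :
  continuous_on_cc g a b -> continuous_on_cc_C (fun x => expi (g x)) a b.
Proof.
  apply continuous_on_cc_C_comp_derivable. intros t. eexists. apply is_derive_C_expi.
Qed.

Lemma continuous_on_cc_C_poly_chain (cs : list C) (g dg : R -> R) (a b : R) :
  C1_on_cc g dg a b ->
  continuous_on_cc_C (fun x => poly_eval cs (RtoC (g x)) * RtoC (dg x))%C a b.
Proof.
  intros [Hg [_ Hdg]]. apply continuous_on_cc_C_mult.
  - apply (continuous_on_cc_C_comp_derivable (fun s => poly_eval cs (RtoC s))); [|exact Hg].
    intros t. eexists. apply is_derive_C_poly_eval.
  - now apply continuous_on_cc_C_RtoC.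
Qed.

Lemma is_RInt_expi_poly_chain (a b : R) (g dg : R -> R) (cs : list C) :
  a < b -> C1_on_cc g dg a b ->
  is_RInt (V := C_R_NormedModule)
    (fun x => expi (g x) * (poly_eval cs (RtoC (g x)) * RtoC (dg x)))%C a b
    (expi (g a) * boundary_sum cs (poly_deg cs) (RtoC (g a))
     - expi (g b) * boundary_sum cs (poly_deg cs) (RtoC (g b)))%C.
Proof.
  intros Hab Hg1. pose proof Hg1 as [Hg [Hdg _]].
  set (u := fun s => (- (expi s * boundary_sum cs (poly_deg cs) (RtoC s)))%C).
  replace (expi (g a) * boundary_sum cs (poly_deg cs) (RtoC (g a))
           - expi (g b) * boundary_sum cs (poly_deg cs) (RtoC (g b)))%C
    with (u (g b) - u (g a))%C by (unfold u; ring).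
  apply (is_RInt_derive_C_interior (fun x => u (g x))); [exact Hab | | |].
  - apply continuous_on_cc_C_comp_derivable; [|exact Hg].
    intros t. eexists. apply is_derive_C_expi_boundary_sum.
  - apply continuous_on_cc_C_mult;
      [apply continuous_on_cc_C_expi_comp, Hg | apply continuous_on_cc_C_poly_chain, Hg1].
  - intros x Hx.
    replace (expi (g x) * (poly_eval cs (RtoC (g x)) * RtoC (dg x)))%C
      with (expi (g x) * poly_eval cs (RtoC (g x)) * RtoC (dg x))%C by ring.
    apply is_derive_C_comp; [apply is_derive_C_expi_boundary_sum | auto].
Qed.

Lemma Cmod_expi (t : R) : Cmod (expi t) = 1.
Proof.
  unfold Cmod, expi; cbn [fst snd].
  replace (cos t ^ 2 + sin t ^ 2) with 1 by (rewrite <- (sin2_cos2 t); unfold Rsqr; ring).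
  apply sqrt_1.
Qed.

Theorem lemma8p7 (a b : R) (f : R -> C) (g dg : R -> R) (p : list C) :
  a < b ->
  continuous_on_cc f a b ->
  C1_on_cc g dg a b ->
  (forall x, a <= x <= b -> 0 < Rabs (dg x)) ->
  Cmod ( (@RInt C_R_CompleteNormedModule (fun x => (expi (g x) * f x)%C) a b
          - expi (g a) * sum_n (fun k => (Ci ^ (k + 1) * poly_eval (poly_deriv_n k p) (RtoC (g a)))%C) (poly_deg p)
          + expi (g b) * sum_n (fun k => (Ci ^ (k + 1) * poly_eval (poly_deriv_n k p) (RtoC (g b)))%C) (poly_deg p))%C )
  <= RInt (fun x => Cmod (f x - poly_eval p (RtoC (g x)) * RtoC (dg x))%C) a b.
Proof.
  intros Hab Hf Hg _.
  set (q := fun x => (poly_eval p (RtoC (g x)) * RtoC (dg x))%C).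
  set (E := fun x => (expi (g x) * f x)%C).
  set (M := fun x => Cmod (f x - q x)%C).
  assert (Hfc := continuous_on_cc_C_of_continuous_on_cc f a b Hf).
  assert (HE : is_RInt (V := C_R_NormedModule) E a b (RInt (V := C_R_CompleteNormedModule) E a b)).
  { apply (RInt_correct (V := C_R_CompleteNormedModule)), ex_RInt_continuous_on_cc_C; [lra|].
    apply continuous_on_cc_C_mult; [apply continuous_on_cc_C_expi_comp, Hg | exact Hfc]. }
  assert (HM : is_RInt M a b (RInt M a b)).
  { apply (RInt_correct (V := R_CompleteNormedModule)), ex_RInt_continuous_on_cc; [lra|].
    apply continuous_on_cc_Cmod, continuous_on_cc_C_minus; [exact Hfc|].
    apply continuous_on_cc_C_poly_chain, Hg. }
  assert (Hdiff := is_RInt_minus _ _ a b _ _ HE (is_RInt_expi_poly_chain a b g dg p Hab Hg)).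
  rewrite Cmod_norm.
  refine (Rle_trans _ _ _ (Req_le _ _ _) (norm_RInt_le _ M a b _ _ (Rlt_le _ _ Hab) _ Hdiff HM)).
  - f_equal. unfold boundary_sum. change minus with Cminus. ring.
  - intros x _. rewrite <- Cmod_norm. change minus with Cminus. unfold E, M, q.
    replace (expi (g x) * f x - expi (g x) * (poly_eval p (RtoC (g x)) * RtoC (dg x)))%C
      with (expi (g x) * (f x - poly_eval p (RtoC (g x)) * RtoC (dg x)))%C by ring.
    rewrite Cmod_mult, Cmod_expi. lra.
Qed.
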